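(* Let $(G=(V,E),(p_e)_{e\in E})$ be an instance of the Independent Cascade (IC) model, let $k\in\mathbb{Z}^+$ and $d\in\mathbb{Z}^+$. Let $\pi_g$ be the greedy policy, and let $\alpha(T_g)$ be the regret ratio of the $(\pi_g,k,d)$-process (both defined in the context). Then for every policy $\pi_*$, \[F(\pi_g,k,d)\ \ge\ \big(1-e^{-1/\alpha(T_g)}\big)\cdot F(\pi_*,k,d).\]
   Context: IC model: a directed graph $G=(V,E)$ with a probability $p_e\in(0,1]$ on each edge. Each edge is independently live with probability $p_e$ and dead otherwise. Diffusion proceeds in rounds: in each round every node activated in the previous round (seed nodes count as activated when seeded) attempts to activate each inactive out-neighbor $u$ along edge $(v,u)$, succeeding iff the edge is live; the state (live/dead) of each attempted edge thereby becomes observed. A realization is a pair $\phi=(L(\phi),D(\phi))$ of disjoint subsets of $E$ (observed live and observed dead edges); it is full if $L(\phi)\cup D(\phi)=E$; $\Psi$ denotes the set of full realizations, $\phi_\emptyset=(\emptyset,\emptyset)$. $\phi_1\prec\phi_2$ means $L(\phi_1)\subseteq L(\phi_2)$ and $D(\phi_1)\subseteq D(\phi_2)$, and $\Pr[\phi_2\mid\phi_1]=\prod_{e\in L(\phi_2)\setminus L(\phi_1)}p_e\prod_{e\in D(\phi_2)\setminus D(\phi_1)}(1-p_e)$; $\Pr[\phi]=\Pr[\phi\mid\phi_\emptyset]$. A status is a pair $U=(\dot S(U),\dot\phi(U))$ of a set of currently active nodes and a realization of the observed edges. For $S\subseteq V$, full $\psi$ and $t\in\mathbb{Z}^+\cup\{\infty\}$,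 $A_t(S,\psi)$ is the set of nodes $v$ such that some node of $S$ reaches $v$ via a path of at most $t$ edges (any length if $t=\infty$) all in $L(\psi)$. Define $\Delta_t(S,V^*,\psi)=|A_t(S\cup V^*,\psi)|-|A_t(S,\psi)|$ and $\Delta f_t(S,V^*,\phi)=\sum_{\psi\in\Psi,\ \phi\prec\psi}\Pr[\psi\mid\phi]\,\Delta_t(S,V^*,\psi)$. A policy $\pi$ maps each status $(S,\phi)$ to a single node $\pi(S,\phi)\in V$. The $(\pi,k,d)$-process: set $(S,\phi)=(\emptyset,\phi_\emptyset)$; repeat $k$ times: (seeding step) select and activate the node $\pi(S,\phi)$; (observing step) observe the diffusion for $d$ rounds (waiting a round is allowed even if nothing can spread) and update $S$ to the set of currently active nodes and $\phi$ to the currently observed realization. Finally let the diffusion run until it terminates. $F(\pi,k,d)$ is the expected number of active nodes at the end. The greedy policy is $\pi_g(S,\phi)\in\arg\max_{v\in V}\Delta f_\infty(S,\{v\},\phi)$. For a status $U$, let $\dot{\mathcal U}_\infty(U)$ be the set of possible statuses reached when, starting from $U$, the diffusion continues without new seeds until it terminates (each with probability $\Pr[\dot\phi(U_* )\mid\dot\phi(U)]$). Define \[\alpha_{\infty,\infty}(U)=\frac{\sum_{U_*\in\dot{\mathcal U}_\infty(U)}\Pr[\dot\phi(U_* )\mid\dot\phi(U)]\max_v\Delta f_\infty(\dot S(U_* ),\{v\},\dot\phi(U_* ))}{\max_v\Delta f_\infty(\dot S(U),\{v\},\dot\phi(U))}.\] $\alpha(T_g)$ is the maximum of $\alpha_{\infty,\infty}(U)$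 over all statuses $U$ that appear in the decision tree $T_g$ of the $(\pi_g,k,d)$-process, i.e., over the initial status $(\emptyset,\phi_\emptyset)$ and every status that can be observed (with positive probability) at a seeding step of that process. *)

From HB Require Import structures.
From mathcomp Require Import all_boot all_order all_algebra.
From mathcomp Require Import reals sequences exp.

Set Implicit Arguments.
Unset Strict Implicit.
Unset Printing Implicit Defensive.

Import Order.TTheory GRing.Theory Num.Theory.
Local Open Scope ring_scope.

Section IC.
Variable R : realType.
Variable V : finType.

(* directed edges are pairs (tail, head) *)
Definition edge := (V * V)%type.

Definition realization := ({set edge} * {set edge})%type.
Definition liveE (phi : realization) : {set edge} := phi.1.
Definition deadE (phi : realization) : {set edge} := phi.2.

Definition is_realization (phi : realization) : bool :=
  [disjoint liveE phi & deadE phi].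

Definition full (E : {set edge}) (psi : realization) : bool :=
  is_realization psi && (liveE psi :|: deadE psi == E).

Definition phi_empty : realization := (set0, set0).

Definition prec (phi1 phi2 : realization) : bool :=
  (liveE phi1 \subset liveE phi2) && (deadE phi1 \subset deadE phi2).

Definition Prc (p : edge -> R) (phi2 phi1 : realization) : R :=
  (\prod_(e in liveE phi2 :\: liveE phi1) p e) *
  (\prod_(e in deadE phi2 :\: deadE phi1) (1 - p e)).

Definition Pr (p : edge -> R) (phi : realization) : R := Prc p phi phi_empty.

(* A_t(S, psi); t = None encodes t = infinity *)
Definition live_rel (psi : realization) : rel V := fun x y => (x, y) \in liveE psi.

Fixpoint A_fin (t : nat) (S : {set V}) (psi : realization) : {set V} :=
  match t with
  | 0 => S
  | t'.+1 => let B := A_fin t' S psi in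
             B :|: [set v | [exists u in B, live_rel psi u v]]
  end.

Definition A_t (t : option nat) (S : {set V}) (psi : realization) : {set V} :=
  match t with
  | Some n => A_fin n S psi
  | None => [set v | [exists u in S, connect (live_rel psi) u v]]
  end.

Definition Delta_t (t : option nat) (S Vs : {set V}) (psi : realization) : R :=
  (#|A_t t (S :|: Vs) psi|)%:R - (#|A_t t S psi|)%:R.

Definition Deltaf_t (E : {set edge}) (p : edge -> R) (t : option nat)
    (S Vs : {set V}) (phi : realization) : R :=
  \sum_(psi : realization | full E psi && prec phi psi)
     Prc p psi phi * Delta_t t S Vs psi.

Definition Deltaf_inf E p := Deltaf_t E p None.

(* a status: (active nodes, observed realization) *)
Definition status := ({set V} * realization)%type.

Definition policy := status -> V.

(* Every active
   node that has not yet tried its out-edges (equivalently: every unobserved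
   edge from an active node to an inactive node) is attempted. *)
Definition round (E : {set edge}) (psi : realization) (U : status) : status :=
  let S := U.1 in
  let phi := U.2 in
  let att := [set e in E | [&& e.1 \in S, e.2 \notin S,
                              e \notin liveE phi & e \notin deadE phi]] in
  let lv := att :&: liveE psi in
  (S :|: [set e.2 | e in lv], (liveE phi :|: lv, deadE phi :|: (att :\: liveE psi))).

(* continue the diffusion without new seeds until it terminates
   (#|V|.+1 rounds always reach the fixpoint) *)
Definition terminate (E : {set edge}) (psi : realization) (U : status) : status :=
  iter #|V|.+1 (round E psi) U.

Definition seed_observe (E : {set edge}) (pi : policy) (d : nat)
    (psi : realization) (U : status) : status :=
  iter d (round E psi) (pi U |: U.1, U.2).

Definition status0 : status := (set0, phi_empty).

(* status at the beginning of the (i+1)-th seeding step *)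
Definition status_at (E : {set edge}) (pi : policy) (d : nat)
    (psi : realization) (i : nat) : status :=
  iter i (seed_observe E pi d psi) status0.

Definition final_status (E : {set edge}) (pi : policy) (k d : nat)
    (psi : realization) : status :=
  terminate E psi (status_at E pi d psi k).

Definition Fval (E : {set edge}) (p : edge -> R) (pi : policy) (k d : nat) : R :=
  \sum_(psi : realization | full E psi)
     Pr p psi * (#|(final_status E pi k d psi).1|)%:R.

Definition greedy (E : {set edge}) (p : edge -> R) (pi : policy) : Prop :=
  forall U : status, forall v : V,
    Deltaf_inf E p U.1 [set v] U.2 <= Deltaf_inf E p U.1 [set pi U] U.2.

(* max_v Deltaf_inf(S, {v}, phi)  (all these values are >= 0) *)
Definition maxgain (E : {set edge}) (p : edge -> R) (U : status) : R :=
  \big[Num.max/0]_(v : V) Deltaf_inf E p U.1 [set v] U.2.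

Definition U_inf (E : {set edge}) (U : status) : {set status} :=
  [set terminate E psi U | psi in [set psi : realization | full E psi && prec U.2 psi]].

Definition alpha_inf (E : {set edge}) (p : edge -> R) (U : status) : R :=
  (\sum_(Us in U_inf E U) Prc p Us.2 U.2 * maxgain E p Us) / maxgain E p U.

(* statuses of the decision tree T of the (pi,k,d)-process: the initial
   status and every status observed with positive probability at a seeding step *)
Definition tree_statuses (E : {set edge}) (p : edge -> R) (pi : policy)
    (k d : nat) : {set status} :=
  [set U | (U == status0) ||
     [exists psi : realization, [exists i : 'I_k,
        [&& full E psi, 0 < Pr p psi & U == status_at E pi d psi i]]]].

Definition alphaT (E : {set edge}) (p : edge -> R) (pi : policy) (k d : nat) : R :=
  \big[Num.max/0]_(U in tree_statuses E p pi k d) alpha_inf E p U.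

End IC.

(* Full realizations are identified with their sets of live edges A, and the
   key tool is resampling: a quantity that depends on A only through the edges
   observed by an adaptive rule keeps its expectation when the unobserved edges
   are replaced by an independent copy B.  Let G_i be the expected spread of the
   first i greedy seeds and U_i the greedy status before seed i+1.  Resampling
   shows that G_(i+1) - G_i is the expected maximal marginal gain at U_i.  It
   also shows (adaptive submodularity) that the spread F of any policy is at
   most G_i plus k times the expected maximal gain once the diffusion from U_i
   has terminated, which by definition of alpha = alpha(T_g) is at most alpha
   times the expected maximal gain at U_i.  Hence F <= G_i + k alpha (G_(i+1) -
   G_i) for all i < k, and this recurrence gives the factor 1 - e^(-1/alpha). *)

From HB Require Import structures.
From mathcomp Require Import all_boot all_order all_algebra.
From mathcomp Require Import reals sequences exp.
From mathcomp Require Import ring lra.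
Import Order.TTheory GRing.Theory Num.Theory.
Local Open Scope ring_scope.

Set Implicit Arguments.
Unset Strict Implicit.
Unset Printing Implicit Defensive.

Section LiveEdgeWeights.
Variables (R : realType) (V : finType) (E : {set V * V}) (p : V * V -> R).
Hypothesis hp : forall e, e \in E -> 0 < p e <= 1.
Implicit Types (A B C L D O X Y Z : {set V * V}) (e : V * V).

Definition edge_weight e (b : bool) : R :=
  if e \in E then (if b then p e else 1 - p e) else (if b then 0 else 1).

(* Full realizations are identified with their sets of live edges: [weight A]
   is the probability that exactly the edges of [A] are live. *)
Definition weight A : R := \prod_e edge_weight e (e \in A).

Lemma edge_weight_ge0 e b : 0 <= edge_weight e b.
Proof.
rewrite /edge_weight; case: ifP => He; case: b => //.
- by have /andP[/ltW] := hp He.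
- by have /andP[_] := hp He; rewrite subr_ge0.
Qed.

Lemma edge_weightTF e : edge_weight e true + edge_weight e false = 1.
Proof. by rewrite /edge_weight; case: ifP => _; rewrite ?add0r // addrC subrK. Qed.

Lemma weight_ge0 A : 0 <= weight A.
Proof. by apply: prodr_ge0 => e _; apply: edge_weight_ge0. Qed.

Lemma sum_weight : \sum_A weight A = 1.
Proof.
have -> : (1 : R) = \prod_e (edge_weight e true + edge_weight e false).
  by rewrite big1 // => e _; rewrite edge_weightTF.
rewrite bigA_distr; apply: eq_bigr => J _; apply: eq_bigr => e _.
by case: (e \in J).
Qed.

Lemma weight_subset A : weight A != 0 -> A \subset E.
Proof.
apply: contraR => /subsetPn [e eA eE].
by rewrite /weight (bigD1 e) //= /edge_weight (negbTE eE) eA mul0r.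
Qed.

Lemma weight_eq0 A : ~~ (A \subset E) -> weight A = 0.
Proof. by apply: contraNeq; apply: weight_subset. Qed.

Lemma eq_sum_weight (F G : {set V * V} -> R) :
  (forall A, A \subset E -> F A = G A) ->
  \sum_A weight A * F A = \sum_A weight A * G A.
Proof.
move=> FG; apply: eq_bigr => A _; have [/FG -> //|AE] := boolP (A \subset E).
by rewrite weight_eq0 // !mul0r.
Qed.

Lemma ler_sum_weight (F G : {set V * V} -> R) :
  (forall A, weight A != 0 -> F A <= G A) ->
  \sum_A weight A * F A <= \sum_A weight A * G A.
Proof.
move=> FG; apply: ler_sum => A _; have [->|/FG] := eqVneq (weight A) 0.
  by rewrite !mul0r.
by apply: ler_wpM2l; apply: weight_ge0.
Qed.

Definition splice A B X := (A :&: X) :|: (B :\: X).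

Lemma in_splice_in A B X e : e \in X -> (e \in splice A B X) = (e \in A).
Proof. by move=> eX; rewrite !inE eX /= andbT orbF. Qed.

Lemma in_splice_out A B X e : e \notin X -> (e \in splice A B X) = (e \in B).
Proof. by move=> eX; rewrite !inE (negbTE eX) /= andbF. Qed.

Lemma spliceXX A X : splice A A X = A.
Proof. by apply/setP => e; rewrite !inE; case: (e \in A); case: (e \in X). Qed.

Lemma weightM A B :
  weight A * weight B = \prod_e (edge_weight e (e \in A) * edge_weight e (e \in B)).
Proof. by rewrite big_split. Qed.

Definition stopping (O : {set V * V} -> {set V * V}) :=
  forall A A', (forall e, e \in O A -> (e \in A) = (e \in A')) -> O A' = O A.

(* Exchanging the two copies off the stopping set is an involution of pairs
   that preserves both the stopping set and the product weight. *)
Lemma sum_weight2_swap (O : {set V * V} -> {set V * V}) (G : _ -> _ -> R) :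
  stopping O ->
  \sum_A \sum_B weight A * weight B * G A B =
  \sum_A \sum_B weight A * weight B * G (splice A B (O A)) (splice B A (O A)).
Proof.
move=> hO.
pose h x := (splice x.1 x.2 (O x.1), splice x.2 x.1 (O x.1)).
have Oh A B : O (splice A B (O A)) = O A.
  by apply: hO => e He; rewrite in_splice_in.
have hK : involutive h.
  case=> A B; rewrite /h /= Oh; congr (_, _); apply/setP => e;
    by have [eO|eO] := boolP (e \in O A);
      rewrite ?(in_splice_in _ _ eO) ?(in_splice_out _ _ eO).
rewrite !pair_bigA (reindex_inj (inv_inj hK)) /=; apply: eq_bigr => x _.
congr (_ * _); rewrite !weightM; apply: eq_bigr => e _.
have [eO|eO] := boolP (e \in O x.1).
  by rewrite /h /= !(in_splice_in _ _ eO).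
by rewrite /h /= !(in_splice_out _ _ eO) mulrC.
Qed.

(* The tower property of the adaptive analysis: the live edges that a stopping
   rule has not observed may be resampled independently. *)
Lemma sum_weight_resample (T : Type) (Uf : {set V * V} -> T)
    (O : T -> {set V * V}) (h : T -> {set V * V} -> R) :
  (forall A A', (forall e, e \in O (Uf A) -> (e \in A) = (e \in A')) ->
     Uf A' = Uf A) ->
  \sum_A weight A * h (Uf A) A =
  \sum_A weight A * \sum_B weight B * h (Uf A) (splice A B (O (Uf A))).
Proof.
move=> Ustop.
have UfS A B : Uf (splice A B (O (Uf A))) = Uf A.
  by apply: Ustop => e eO; rewrite in_splice_in.
transitivity (\sum_A \sum_B weight A * weight B * h (Uf A) A).
  apply: eq_bigr => A _; rewrite -[LHS]mulr1 -sum_weight big_distrr /=.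
  by apply: eq_bigr => B _; rewrite mulrAC.
rewrite (@sum_weight2_swap (O \o Uf) (fun A _ => h (Uf A) A)); last first.
  by move=> A A' /Ustop /= ->.
apply: eq_bigr => A _; rewrite big_distrr; apply: eq_bigr => B _.
by rewrite /= UfS mulrA.
Qed.

Definition realize A : realization V := (A, E :\: A).

Lemma full_realize A : A \subset E -> full E (realize A).
Proof.
move=> AE; apply/andP; split.
  by rewrite /is_realization disjoints_subset; apply/subsetP => e; rewrite !inE => ->.
by apply/eqP/setP => e; rewrite !inE; case: (boolP (e \in A)) => eA //=; rewrite (subsetP AE).
Qed.

Lemma full_realizeE psi : full E psi -> psi = realize psi.1.
Proof.
case: psi => L D /andP[/= LD /eqP LDE]; rewrite /realize /=; congr (_, _).
apply/setP => e; rewrite -LDE !inE; case: (boolP (e \in D)) => eD.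
  by rewrite (disjointFl LD eD).
by rewrite orbF andNb.
Qed.

Lemma full_live_subset psi : full E psi -> psi.1 \subset E.
Proof. by case: psi => L D /andP[_ /eqP <-]; apply: subsetUl. Qed.

Lemma Pr_realize A : A \subset E -> Pr p (realize A) = weight A.
Proof.
move=> /subsetP AE; rewrite /Pr /Prc /= !setD0 /weight.
rewrite [X in X * _]big_mkcond [X in _ * X]big_mkcond -big_split /=.
apply: eq_bigr => e _; rewrite /edge_weight !inE; have := AE e.
by case: (e \in A); case: (e \in E) => //= h; rewrite ?mulr1 ?mul1r //; have := h isT.
Qed.

Lemma prec_trans (phi1 phi2 phi3 : realization V) :
  prec phi1 phi2 -> prec phi2 phi3 -> prec phi1 phi3.
Proof.
by move=> /andP[h1 h2] /andP[h3 h4]; rewrite /prec (subset_trans h1 h3) (subset_trans h2 h4).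
Qed.

Lemma prod_setD_chain (f : V * V -> R) X Y Z :
  X \subset Y -> Y \subset Z ->
  \prod_(e in Z :\: X) f e = \prod_(e in Y :\: X) f e * \prod_(e in Z :\: Y) f e.
Proof.
move=> /subsetP XY /subsetP YZ.
rewrite [LHS]big_mkcond [X in _ * X]big_mkcond [X in X * _]big_mkcond -big_split /=.
apply: eq_bigr => e _; have := XY e; have := YZ e; rewrite !inE.
by case: (e \in X); case: (e \in Y); case: (e \in Z) => //= h1 h2;
  rewrite ?mulr1 ?mul1r //; [have := h2 isT | have := h1 isT].
Qed.

Lemma Prc_trans (phi phi' psi : realization V) :
  prec phi phi' -> prec phi' psi ->
  Prc p psi phi = Prc p phi' phi * Prc p psi phi'.
Proof.
move=> /andP[h1 h2] /andP[h3 h4].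
by rewrite /Prc (prod_setD_chain _ h1 h3) (prod_setD_chain _ h2 h4) mulrACA.
Qed.

Lemma sum_weight_inside O Z : [disjoint Z & O] ->
  \sum_(B | B :\: O == Z) \prod_(e in O) edge_weight e (e \in B) = 1.
Proof.
move=> ZO.
pose F e : R := if e \in O then edge_weight e true else (e \in Z)%:R.
pose G e : R := if e \in O then edge_weight e false else (e \notin Z)%:R.
have FG1 : \prod_e (F e + G e) = 1.
  rewrite big1 // => e _; rewrite /F /G; case: (e \in O); first exact: edge_weightTF.
  by case: (e \in Z); rewrite ?addr0 ?add0r.
rewrite -[RHS]FG1 bigA_distr [LHS]big_mkcond /=; apply: eq_bigr => J _.
case: eqP => JZ.
  rewrite [LHS]big_mkcond; apply: eq_bigr => e _; rewrite /F /G.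
  case: (boolP (e \in O)) => eO; first by case: (e \in J).
  have : (e \in J :\: O) = (e \in Z) by rewrite JZ.
  by rewrite inE eO /= => ->; case: (e \in Z).
have [e He] : exists e, (e \in J :\: O) != (e \in Z).
  apply/existsP; apply: contraT => /existsPn H.
  by case: JZ; apply/setP => e; apply/eqP; move: (H e); rewrite negbK.
have eO : e \notin O.
  by apply/negP => eO; move: He; rewrite inE eO /= (disjointFl ZO eO).
rewrite (bigD1 e) //= /F /G (negbTE eO).
by move: He; rewrite inE eO /=; case: (e \in J); case: (e \in Z); rewrite ?mul0r.
Qed.

Lemma sum_weight_outside O Z : [disjoint Z & O] ->
  \sum_(B | B :\: O == Z) weight B = \prod_(e in ~: O) edge_weight e (e \in Z).
Proof.
move=> ZO; rewrite -[RHS]mul1r -{1}(sum_weight_inside ZO) big_distrl /=.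
apply: eq_bigr => B /eqP BZ; rewrite /weight (bigID (mem O)) /=; congr (_ * _).
apply: eq_big => e; first by rewrite inE.
by move=> eO; rewrite -BZ inE eO.
Qed.

Section Extensions.
Variables (L D : {set V * V}).
Hypotheses (LD : [disjoint L & D]) (LDE : L :|: D \subset E).
Let O := L :|: D.

Lemma full_prec_realize C :
  full E (realize C) && prec (L, D) (realize C) = (C \subset E) && (C :&: O == L).
Proof.
have sD e : e \in D -> e \in E by move=> eD; apply: (subsetP LDE); rewrite inE eD orbT.
apply/idP/idP.
  case/andP=> /andP[_ /eqP CE] /andP[/subsetP LC /subsetP DC]; apply/andP; split.
    by apply/subsetP => e eC; rewrite -CE inE eC.
  apply/eqP/setP => e; rewrite !inE.
  case: (boolP (e \in L)) => eL; first by rewrite (LC _ eL).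
  case: (boolP (e \in D)) => eD; last by rewrite andbF.
  by have := DC _ eD; rewrite inE => /andP[/negbTE ->].
case/andP=> /subsetP CE /eqP CO.
have hC e : (e \in L) = (e \in C) && (e \in O) by rewrite -CO inE.
apply/andP; split; [apply/andP; split|].
- by rewrite /is_realization disjoints_subset; apply/subsetP => e; rewrite !inE => ->.
- apply/eqP/setP => e; rewrite !inE.
  by case: (boolP (e \in C)) => eC //=; rewrite (CE _ eC).
- apply/andP; split; apply/subsetP => e; first by rewrite hC => /andP[].
  move=> eD; rewrite inE (sD _ eD) andbT; apply/negP => eC.
  by move: (disjointFl LD eD); rewrite hC eC inE eD orbT.
Qed.

Lemma Prc_realize C : C \subset E -> C :&: O = L ->
  Prc p (realize C) (L, D) = \prod_(e in ~: O) edge_weight e (e \in C).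
Proof.
move=> /subsetP CE CO.
have hC e : (e \in L) = (e \in C) && (e \in O) by rewrite -CO inE.
rewrite /Prc /= [X in X * _]big_mkcond [X in _ * X]big_mkcond [RHS]big_mkcond -big_split /=.
apply: eq_bigr => e _.
have := hC e; have := CE e; have := disjointFl LD (x := e); have := subsetP LDE e.
rewrite /edge_weight /O !inE.
case: (e \in L); case: (e \in D); case: (e \in C); case: (e \in E) => //= h1 h2 h3 h4;
  rewrite ?mulr1 ?mul1r //; by [have := h1 isT | have := h2 isT | have := h3 isT].
Qed.

Lemma setU_setD_eq X Y :
  (L :|: (X :\: O) == L :|: (Y :\: O)) = (X :\: O == Y :\: O).
Proof.
apply/eqP/eqP => [XY|-> //]; apply/setP => e; move/setP/(_ e): XY; rewrite !inE.
by case: (boolP (e \in L)) => eL; case: (e \in D) => //=; rewrite ?orbF.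
Qed.

End Extensions.

(* Conditioning on a partial realization amounts to resampling the unobserved
   edges. *)
Lemma sum_full_extension (phi : realization V) (g : realization V -> R) :
  [disjoint phi.1 & phi.2] -> phi.1 :|: phi.2 \subset E ->
  \sum_(psi | full E psi && prec phi psi) Prc p psi phi * g psi =
  \sum_B weight B * g (realize (phi.1 :|: (B :\: (phi.1 :|: phi.2)))).
Proof.
case: phi => L D /= LD LDE; set O := L :|: D.
pose Q C := (C \subset E) && (C :&: O == L).
transitivity (\sum_(C | Q C) \prod_(e in ~: O) edge_weight e (e \in C) * g (realize C)).
  rewrite (reindex_onto realize fst); last by move=> psi /andP[/full_realizeE ->].
  apply: eq_big => [C|C]; first by rewrite eqxx andbT (full_prec_realize LD LDE).
  by rewrite (full_prec_realize LD LDE) => /andP[/andP[CE /eqP CO] _]; rewrite Prc_realize.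
rewrite [RHS](bigID (fun B => B \subset E)) /= [X in _ + X]big1 ?addr0; last first.
  by move=> B BE; rewrite weight_eq0 ?mul0r.
rewrite [RHS](partition_big (fun B => L :|: (B :\: O)) Q); last first.
  move=> B /subsetP BE; apply/andP; split.
    rewrite subUset (subset_trans (subsetUl L D) LDE).
    by apply/subsetP => e /setDP[/BE].
  apply/eqP/setP => e; rewrite /O !inE.
  by case: (boolP (e \in L)) => eL; case: (boolP (e \in D)) => eD //=; rewrite ?andbF.
apply: eq_bigr => C /andP[/subsetP CE /eqP CO].
have CLO : C = L :|: (C :\: O).
  by apply/setP => e; rewrite -CO !inE; case: (e \in C); case: (e \in L); case: (e \in D).
rewrite (eq_bigl (fun B => B :\: O == C :\: O)) => [|B]; last first.
  rewrite [in X in _ && X]CLO setU_setD_eq; apply/andP/idP => [[//]|BC]; split=> //.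
  apply/subsetP => e eB; have [eO|eO] := boolP (e \in O); first exact: (subsetP LDE).
  by move/eqP/setP/(_ e): BC; rewrite !in_setD eO eB => /esym /CE.
rewrite [RHS](eq_bigr (fun B => weight B * g (realize C))) => [|B /eqP BC]; last first.
  by rewrite CLO -BC.
rewrite -big_distrl /= sum_weight_outside; last first.
  by rewrite disjoints_subset; apply/subsetP => e; rewrite !inE => /andP[->].
by congr (_ * _); apply: eq_bigr => e; rewrite inE => eO; rewrite in_setD eO.
Qed.

Lemma sum_Prc_full_extension (phi : realization V) :
  [disjoint phi.1 & phi.2] -> phi.1 :|: phi.2 \subset E ->
  \sum_(psi | full E psi && prec phi psi) Prc p psi phi = 1.
Proof.
move=> LD LDE; rewrite -sum_weight.
under eq_bigr do rewrite -[Prc _ _ _]mulr1.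
by rewrite (@sum_full_extension phi (fun _ => 1)) //; under eq_bigr do rewrite mulr1.
Qed.

End LiveEdgeWeights.

Section Reachability.
Variable V : finType.
Implicit Types (X Y : {set V}) (A : {set V * V}) (u v : V).

(* [reach X A] is [A_t None X psi] for every [psi] with live edges [A]. *)
Definition reach X A : {set V} :=
  [set v | [exists u in X, connect (fun x y => (x, y) \in A) u v]].

Lemma sub_reach X A : X \subset reach X A.
Proof. by apply/subsetP => u uX; rewrite inE; apply/exists_inP; exists u. Qed.

Lemma reach_step X A u v : u \in reach X A -> (u, v) \in A -> v \in reach X A.
Proof.
rewrite !inE => /exists_inP[w wX wu] uv; apply/exists_inP; exists w => //.
by rewrite (connect_trans wu) // connect1.
Qed.

Lemma reach_min X Y A : X \subset Y ->
  (forall u v, u \in Y -> (u, v) \in A -> v \in Y) -> reach X A \subset Y.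
Proof.
move=> /subsetP XY Yclosed; apply/subsetP => v.
rewrite inE => /exists_inP[u /XY uY /connectP[s us ->]] {v}.
by elim: s u us uY => //= w s IHs u /andP[uw ws] /Yclosed /(_ uw); apply: IHs.
Qed.

Lemma reachU X Y A : reach (X :|: Y) A = reach X A :|: reach Y A.
Proof.
apply/setP => v; rewrite !inE; apply/exists_inP/orP.
  by case=> u; rewrite inE => /orP[] uX c; [left|right]; apply/exists_inP; exists u.
by case=> /exists_inP[u uX c]; exists u; rewrite // inE uX ?orbT.
Qed.

Lemma reachS X Y A : X \subset Y -> reach X A \subset reach Y A.
Proof. by move=> XY; rewrite -(setUidPr XY) reachU subsetUl. Qed.

Lemma reach_between X Y A : X \subset Y -> Y \subset reach X A -> reach Y A = reach X A.
Proof.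
move=> XY YX; apply/eqP; rewrite eqEsubset (reachS A XY) andbT.
by apply: reach_min => // u v; apply: reach_step.
Qed.

Lemma reach_local X A A' :
  (forall e, e.1 \in reach X A -> (e \in A) = (e \in A')) -> reach X A' = reach X A.
Proof.
move=> AA'; apply/eqP; rewrite eqEsubset; apply/andP; split.
  apply: reach_min; first exact: sub_reach.
  by move=> u v uR uv; apply: (reach_step uR); rewrite (AA' (u, v) uR).
suff: reach X A \subset reach X A' :&: reach X A by rewrite subsetI => /andP[].
apply: reach_min; first by rewrite subsetI !sub_reach.
move=> u v /setIP[u1 u2] uv; rewrite inE (reach_step u2 uv) andbT.
by apply: reach_step u1 _; rewrite -(AA' (u, v)).
Qed.

Lemma reach0 A : reach set0 A = set0.
Proof. by apply/eqP; rewrite -subset0; apply: reach_min => // u v; rewrite inE. Qed.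

Lemma card_reachU X Y A :
  #|reach (X :|: Y) A| = #|reach X A| + #|reach Y A :\: reach X A|.
Proof.
rewrite reachU -(cardsID (reach X A) (reach X A :|: reach Y A)) setUK.
by rewrite setDUl setDv set0U.
Qed.

End Reachability.

Section Diffusion.
Variables (V : finType) (E : {set V * V}).
Implicit Types (A : {set V * V}) (U : status V) (f g : {set V * V} -> status V -> status V).

Definition observed U : {set V * V} := U.2.1 :|: U.2.2.

Definition attempts U : {set V * V} :=
  [set e in E | [&& e.1 \in U.1, e.2 \notin U.1, e \notin U.2.1 & e \notin U.2.2]].

Definition step A U : status V := round E (realize E A) U.

Lemma stepE A U : step A U =
  (U.1 :|: [set e.2 | e in attempts U :&: A],
   (U.2.1 :|: (attempts U :&: A), U.2.2 :|: (attempts U :\: A))).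
Proof. by []. Qed.

Definition wf_status U :=
  [/\ observed U \subset E, {in U.2.1, forall e, e.2 \in U.1},
      {in observed U, forall e, e.1 \in U.1} & [disjoint U.2.1 & U.2.2]].

Definition consistent A U := (U.2.1 \subset A) && [disjoint U.2.2 & A].

Definition inflationary f := forall A U,
  [/\ U.1 \subset (f A U).1, U.2.1 \subset (f A U).2.1 & U.2.2 \subset (f A U).2.2].

Definition adapted f := forall A A' U,
  (forall e, e \in observed (f A U) -> (e \in A) = (e \in A')) -> f A' U = f A U.

Definition admissible f :=
  [/\ inflationary f, adapted f, forall A U, wf_status U -> wf_status (f A U) &
      forall A U, consistent A U -> consistent A (f A U)].

Lemma observedS U U' : U.2.1 \subset U'.2.1 -> U.2.2 \subset U'.2.2 ->
  observed U \subset observed U'.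
Proof. exact: setUSS. Qed.

Lemma admissible_id : admissible (fun _ U => U).
Proof. by split => // A U; split. Qed.

Lemma admissible_comp f g : admissible f -> admissible g ->
  admissible (fun A U => g A (f A U)).
Proof.
move=> [mf lf wf cf] [mg lg wg cg]; split.
- move=> A U; have [a1 a2 a3] := mf A U; have [b1 b2 b3] := mg A (f A U).
  by split; [apply: subset_trans b1 | apply: subset_trans b2 | apply: subset_trans b3].
- move=> A A' U AA'; have [_ b2 b3] := mg A (f A U).
  rewrite (lf A A') => [|e eo]; first exact: lg.
  by apply: AA'; apply: (subsetP (observedS b2 b3)).
- by move=> A U /wf /wg.
- by move=> A U /cf /cg.
Qed.

Lemma admissible_iter f n : admissible f -> admissible (fun A U => iter n (f A) U).
Proof.
move=> af; elim: n => [|n IHn]; first exact: admissible_id.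
exact: admissible_comp IHn af.
Qed.

Lemma step_inflationary : inflationary step.
Proof. by move=> A U; rewrite stepE /=; split; apply: subsetUl. Qed.

Lemma step_adapted : adapted step.
Proof.
move=> A A' U AA'; rewrite !stepE.
have attA e : e \in attempts U -> (e \in A) = (e \in A').
  move=> ea; apply: AA'; rewrite stepE /observed /= !in_setU in_setI in_setD ea.
  by case: (e \in A); rewrite ?orbT.
have -> : attempts U :&: A' = attempts U :&: A.
  by apply/setP => e; rewrite !in_setI; case: (boolP (e \in attempts U)) => // /attA ->.
have -> // : attempts U :\: A' = attempts U :\: A.
by apply/setP => e; rewrite !in_setD; case: (boolP (e \in attempts U)) => [/attA ->|]; rewrite ?andbF.
Qed.

Lemma in_attempts e U : (e \in attempts U) =
  (e \in E) && [&& e.1 \in U.1, e.2 \notin U.1, e \notin U.2.1 & e \notin U.2.2].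
Proof. by rewrite inE. Qed.

Lemma step_wf A U : wf_status U -> wf_status (step A U).
Proof.
case: U => S [L D] [/= oE Lhead otail LD]; rewrite stepE /=.
have attP e : e \in attempts (S, (L, D)) ->
    [/\ e \in E, e.1 \in S, e.2 \notin S, e \notin L & e \notin D].
  by rewrite in_attempts => /andP[-> /and4P[-> -> -> ->]].
split => /=.
- apply/subsetP => e; rewrite /observed /= !in_setU in_setI in_setD.
  case/orP => [/orP[eL|/andP[/attP[]]]|/orP[eD|/andP[_ /attP[]]]] //;
  by apply: (subsetP oE); rewrite in_setU ?eL ?eD ?orbT.
- move=> e; rewrite !in_setU in_setI => /orP[/Lhead ->//|/andP[ea eA]].
  by apply/orP; right; apply/imsetP; exists e; rewrite // in_setI ea.
- move=> e; rewrite /observed /= !in_setU in_setI in_setD.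
  case/orP => [/orP[eL|/andP[/attP[_ -> _ _ _] _]]|/orP[eD|/andP[_ /attP[_ -> _ _ _]]]] //;
  by rewrite otail // /observed in_setU ?eL ?eD ?orbT.
- rewrite -setI_eq0; apply/eqP/setP => e; rewrite in_set0 in_setI !in_setU in_setI in_setD.
  case: (boolP (e \in attempts (S, (L, D)))) => [/attP[_ _ _ /negbTE -> /negbTE ->]|_] /=.
    by case: (e \in A).
  by rewrite !andbF !orbF; apply/negP => /andP[eL eD]; move: (disjointFr LD eL); rewrite eD.
Qed.

Lemma step_consistent A U : consistent A U -> consistent A (step A U).
Proof.
case: U => S [L D] /andP[/= LA DA]; rewrite stepE /consistent /=.
rewrite subUset LA subsetIr /= -setI_eq0; apply/eqP/setP => e; rewrite !inE.
case: (boolP (e \in A)) => eA; rewrite ?andbF ?andbT //= ?orbF.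
by rewrite (disjointFl DA eA).
Qed.

Lemma admissible_step : admissible step.
Proof.
split; [exact: step_inflationary | exact: step_adapted | exact: step_wf | exact: step_consistent].
Qed.

Definition seed (pi : policy V) A U : status V := (pi U |: U.1, U.2).

Lemma admissible_seed pi : admissible (seed pi).
Proof.
split=> //.
- by move=> A U; split => //; apply: subsetUr.
- move=> A [S [L D]] [/= oE Lhead otail LD]; split => //= e eo; rewrite in_setU.
    by rewrite Lhead ?orbT.
  by rewrite otail ?orbT.
Qed.

Lemma admissible_status_at pi d i :
  admissible (fun A U => iter i (seed_observe E pi d (realize E A)) U).
Proof.
apply: admissible_iter.
exact: admissible_comp (admissible_seed pi) (admissible_iter d admissible_step).
Qed.

Lemma admissible_terminate : admissible (fun A U => terminate E (realize E A) U).
Proof. exact: admissible_iter admissible_step. Qed.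

Lemma step_sub_reach A U : (step A U).1 \subset reach U.1 A.
Proof.
rewrite stepE /=; apply/subsetP => v; rewrite in_setU => /orP[vS|/imsetP[e]].
  exact: (subsetP (sub_reach _ _)).
rewrite in_setI in_attempts => /andP[/andP[_ /and4P[e1 _ _ _]] eA] ->.
by apply: (reach_step (subsetP (sub_reach _ _) _ e1)); rewrite -surjective_pairing.
Qed.

Lemma reach_iter_step n A U : reach (iter n (step A) U).1 A = reach U.1 A.
Proof.
elim: n => // n IHn; rewrite iterS -IHn.
by apply: reach_between; [rewrite stepE subsetUl | exact: step_sub_reach].
Qed.

Lemma reach_seed_observe pi d A U :
  reach (seed_observe E pi d (realize E A) U).1 A = reach (pi U |: U.1) A.
Proof. exact: (reach_iter_step d A (seed pi A U)). Qed.

Lemma observed_step A U : observed (step A U) = observed U :|: attempts U.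
Proof.
rewrite stepE /observed /=; apply/setP => e; rewrite !in_setU in_setI in_setD.
by case: (e \in attempts U); case: (e \in A); rewrite /= ?orbT ?orbF // orbC -!orbA ?orbT.
Qed.

Lemma step_id A U : attempts U = set0 -> step A U = U.
Proof.
by move=> att0; rewrite stepE att0 set0I imset0 set0D !setU0; case: U att0 => ? [].
Qed.

Lemma step_closed A U u v : A \subset E -> wf_status U -> consistent A U ->
  u \in U.1 -> (u, v) \in A -> v \in (step A U).1.
Proof.
move=> /subsetP AE [_ Lhead _ _] /andP[_ DA] uS uvA.
rewrite stepE /= in_setU; case: (boolP (v \in U.1)) => //= vS.
apply/imsetP; exists (u, v) => //; rewrite in_setI uvA andbT in_attempts AE //= uS vS /=.
apply/andP; split; first by apply: contra vS => /Lhead.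
by rewrite (disjointFl DA uvA).
Qed.

Lemma attempts_step_stalled A U : (step A U).1 = U.1 -> attempts (step A U) = set0.
Proof.
move=> stalled; apply/setP => e; rewrite in_set0; apply/negP => ea.
move: (ea); rewrite in_attempts => /andP[eE /and4P[e1 e2 nL nD]].
have : e \notin observed (step A U) by rewrite /observed in_setU negb_or nL nD.
rewrite observed_step in_setU negb_or => /andP[no]; rewrite in_attempts eE -stalled e1 e2 /=.
by move: no; rewrite /observed in_setU negb_or => /andP[-> ->].
Qed.

Lemma increasing_sets_stall (T : finType) (X : nat -> {set T}) :
  (forall j, X j \subset X j.+1) -> exists2 i, (i <= #|T|)%N & X i.+1 = X i.
Proof.
move=> Xinc; case: (boolP [exists i : 'I_#|T|.+1, X i.+1 == X i]).
  by case/existsP => i /eqP Xi; exists i; rewrite // -ltnS.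
move/existsPn => Xgrow.
suff /(_ #|T|.+1 (leqnn _)) : forall j, (j <= #|T|.+1 -> j <= #|X j|)%N.
  by rewrite leqNgt ltnS max_card.
elim=> // j IHj jT; apply: leq_ltn_trans (IHj (ltnW jT)) (proper_card _).
by rewrite properEneq eq_sym Xinc andbT; apply: (Xgrow (Ordinal jT)).
Qed.

(* The active set grows strictly until it stalls, hence stalls within [#|V|]
   rounds; from then on no edge is attempted. *)
Lemma terminate_stalled A U : exists i,
  terminate E (realize E A) U = iter i.+1 (step A) U /\
  (iter i.+1 (step A) U).1 = (iter i (step A) U).1.
Proof.
have inc j : (iter j (step A) U).1 \subset (iter j.+1 (step A) U).1.
  by rewrite iterS stepE subsetUl.
have [i iV stall] := increasing_sets_stall inc.
exists i; split => //.
have fix_from m : iter (m + i.+1) (step A) U = iter i.+1 (step A) U.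
  elim: m => // m IHm; rewrite addSn /= IHm.
  exact/step_id/attempts_step_stalled.
by rewrite /terminate -(subnK (iV : (i < #|V|.+1)%N)) fix_from.
Qed.

Lemma attempts_terminate A U : attempts (terminate E (realize E A) U) = set0.
Proof.
have [i [-> stall]] := terminate_stalled A U.
exact: attempts_step_stalled.
Qed.

Lemma terminate_reach A U : A \subset E -> wf_status U -> consistent A U ->
  (terminate E (realize E A) U).1 = reach U.1 A.
Proof.
move=> AE wU cU; have [i [-> stall]] := terminate_stalled A U.
have [_ _ iter_wf iter_cons] := admissible_iter i admissible_step.
apply/eqP; rewrite eqEsubset; apply/andP; split.
  by rewrite -(reach_iter_step i.+1 A U) sub_reach.
apply: reach_min.
  by have [infl _ _ _] := admissible_iter i.+1 admissible_step; have [] := infl A U.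
move=> u v uS uv; rewrite stall in uS; rewrite iterS.
exact: step_closed AE (iter_wf _ _ wU) (iter_cons _ _ cU) uS uv.
Qed.

End Diffusion.

Section AdaptiveGreedy.
Variables (R : realType) (V : finType) (E : {set V * V}) (p : V * V -> R).
Hypothesis hp : forall e, e \in E -> 0 < p e <= 1.
Implicit Types (A B : {set V * V}) (U : status V) (X : {set V}) (v w : V).

Local Notation weight := (weight E p).
Local Notation realize := (realize E).
Local Notation maxgain := (maxgain E p).

Lemma status0_wf : wf_status E (status0 V).
Proof.
split=> //=; rewrite /observed /= ?setU0 ?sub0set ?disjoints_subset ?sub0set //;
  by move=> e; rewrite inE.
Qed.

Lemma status0_consistent A : consistent A (status0 V).
Proof. by rewrite /consistent sub0set disjoints_subset sub0set. Qed.

Lemma consistent_prec A U : A \subset E -> wf_status E U ->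
  consistent A U = prec U.2 (realize A).
Proof.
move=> AE [oE _ _ _]; rewrite /consistent /prec /=; congr (_ && _).
apply/idP/idP => [DA|/subsetP DEA].
  apply/subsetP => e eD; rewrite in_setD (disjointFr DA eD) /=.
  by apply: (subsetP oE); rewrite in_setU eD orbT.
by rewrite disjoints_subset; apply/subsetP => e /DEA; rewrite !inE => /andP[].
Qed.

Lemma splice_observed A B U : wf_status E U -> consistent A U ->
  U.2.1 :|: (B :\: observed U) = splice A B (observed U).
Proof.
move=> [_ _ _ LD] /andP[LA DA]; apply/setP => e.
rewrite /splice /observed !in_setU !in_setD !in_setI !in_setU.
case: (boolP (e \in U.2.1)) => eL /=; first by rewrite (subsetP LA).
by case: (boolP (e \in U.2.2)) => eD /=; rewrite ?(disjointFr DA eD) ?andbF.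
Qed.

Lemma sum_full_extension_splice A U (g : realization V -> R) :
  wf_status E U -> consistent A U ->
  \sum_(psi | full E psi && prec U.2 psi) Prc p psi U.2 * g psi =
  \sum_B weight B * g (realize (splice A B (observed U))).
Proof.
move=> wU cU; have [oE _ _ LD] := wU.
rewrite (sum_full_extension p g LD oE).
by apply: eq_bigr => B _; rewrite (splice_observed B wU cU).
Qed.

Definition gain X v A : R := (#|reach (X :|: [set v]) A|)%:R - (#|reach X A|)%:R.

Lemma gainE X v A : gain X v A = (#|reach [set v] A :\: reach X A|)%:R.
Proof. by rewrite /gain card_reachU natrD addrAC subrr add0r. Qed.

Lemma gain_ge0 X v A : 0 <= gain X v A.
Proof. by rewrite gainE. Qed.

Lemma Deltaf_inf_splice A U v : wf_status E U -> consistent A U ->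
  Deltaf_inf E p U.1 [set v] U.2 = \sum_B weight B * gain U.1 v (splice A B (observed U)).
Proof. exact: sum_full_extension_splice. Qed.

Lemma Deltaf_inf_ge0 A U v : wf_status E U -> consistent A U ->
  0 <= Deltaf_inf E p U.1 [set v] U.2.
Proof.
move=> wU cU; rewrite (Deltaf_inf_splice v wU cU); apply: sumr_ge0 => B _.
by rewrite mulr_ge0 ?weight_ge0 ?gain_ge0.
Qed.

Lemma maxgain_ge0 U : 0 <= maxgain U.
Proof. exact: bigmax_ge_id. Qed.

Lemma Deltaf_inf_le_maxgain U v : Deltaf_inf E p U.1 [set v] U.2 <= maxgain U.
Proof. exact: (le_bigmax _ (fun v => Deltaf_inf E p U.1 [set v] U.2) v). Qed.

Lemma maxgain_greedy pig A U : greedy E p pig -> wf_status E U -> consistent A U ->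
  maxgain U = Deltaf_inf E p U.1 [set pig U] U.2.
Proof.
move=> pigG wU cU; apply/le_anti; rewrite Deltaf_inf_le_maxgain andbT.
by apply: bigmax_le => [|v _]; [exact: Deltaf_inf_ge0 wU cU | exact: pigG].
Qed.

Definition state (pi : policy V) d i A : status V := status_at E pi d (realize A) i.

Lemma state_adapted pi d i A A' :
  (forall e, e \in observed (state pi d i A) -> (e \in A) = (e \in A')) ->
  state pi d i A' = state pi d i A.
Proof. by have [_ adp _ _] := admissible_status_at E pi d i; apply: adp. Qed.

Lemma state_wf pi d i A : wf_status E (state pi d i A).
Proof. by have [_ _ wf _] := admissible_status_at E pi d i; apply/wf/status0_wf. Qed.

Lemma state_consistent pi d i A : consistent A (state pi d i A).
Proof.
by have [_ _ _ cons] := admissible_status_at E pi d i; apply/cons/status0_consistent.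
Qed.

Lemma reach_state_succ pi d i A :
  reach (state pi d i.+1 A).1 A = reach ((state pi d i A).1 :|: [set pi (state pi d i A)]) A.
Proof. by rewrite setUC; apply: reach_seed_observe. Qed.

Definition spread pi d i : R := \sum_A weight A * (#|reach (state pi d i A).1 A|)%:R.

Lemma Fval_spread pi k d : Fval E p pi k d = spread pi d k.
Proof.
rewrite /Fval (eq_bigl (fun psi => full E psi && prec (phi_empty V) psi)); last first.
  by move=> psi; rewrite /prec !sub0set !andbT.
have LD : [disjoint (phi_empty V).1 & (phi_empty V).2] by rewrite disjoints_subset sub0set.
have LDE : (phi_empty V).1 :|: (phi_empty V).2 \subset E by rewrite setU0 sub0set.
rewrite (sum_full_extension p (fun psi => (#|(final_status E pi k d psi).1|)%:R) LD LDE).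
apply: eq_sum_weight => A AE.
have -> : (phi_empty V).1 :|: (A :\: ((phi_empty V).1 :|: (phi_empty V).2)) = A.
  by apply/setP => e; rewrite !inE.
by rewrite /final_status (terminate_reach AE (state_wf _ _ _ _) (state_consistent _ _ _ _)).
Qed.


Lemma prec_realize_agree (phi : realization V) A A' :
  prec phi (realize A) -> prec phi (realize A') ->
  forall e, e \in phi.1 :|: phi.2 -> (e \in A) = (e \in A').
Proof.
move=> /andP[/subsetP LA /subsetP DA] /andP[/subsetP LA' /subsetP DA'] e.
case/setUP => [/[dup] /LA -> /LA' -> //|/[dup] /DA + /DA'].
by rewrite !in_setD => /andP[/negbTE -> _] /andP[/negbTE -> _].
Qed.

Lemma terminate_prec U psi : wf_status E U -> full E psi -> prec U.2 psi ->
  [/\ wf_status E (terminate E psi U), prec U.2 (terminate E psi U).2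
    & prec (terminate E psi U).2 psi].
Proof.
move=> wU fullp precp; have AE := full_live_subset fullp.
rewrite (full_realizeE fullp) in precp *.
have [infl _ wfT consT] := admissible_terminate E.
have cU : consistent psi.1 U by rewrite consistent_prec.
have wT := wfT psi.1 U wU; have [_ ? ?] := infl psi.1 U.
by split=> //; [apply/andP | rewrite -consistent_prec //; apply: consT].
Qed.

Lemma terminate_fiber U psi0 psi : wf_status E U -> full E psi0 -> prec U.2 psi0 ->
  let T := terminate E psi0 U in
  (full E psi && prec U.2 psi) && (terminate E psi U == T) = full E psi && prec T.2 psi.
Proof.
move=> wU full0 prec0 T; apply/idP/idP => [/andP[/andP[fullp precp] /eqP <-]|].
  by rewrite fullp; have [] := terminate_prec wU fullp precp.
case/andP=> fullp precp; have [_ precUT precT0] := terminate_prec wU full0 prec0.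
rewrite fullp (prec_trans precUT precp) /=; apply/eqP.
have [_ adp _ _] := admissible_terminate E.
rewrite /T (full_realizeE full0) (full_realizeE fullp); apply: adp => e eT.
by apply: (prec_realize_agree (phi := T.2)); rewrite -?full_realizeE.
Qed.

Definition alpha_num U : R := \sum_(Us in U_inf E U) Prc p Us.2 U.2 * maxgain Us.

Lemma alpha_numE A U : wf_status E U -> consistent A U ->
  alpha_num U = \sum_B weight B * maxgain (terminate E (realize (splice A B (observed U))) U).
Proof.
move=> wU cU; rewrite -(sum_full_extension_splice (fun psi => maxgain (terminate E psi U)) wU cU).
rewrite /alpha_num /U_inf.
set P := [set psi | full E psi && prec U.2 psi].
rewrite [RHS](eq_bigl (fun psi => psi \in P)); last by move=> psi; rewrite inE.
rewrite [RHS](partition_big_imset (fun psi => terminate E psi U)).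
apply: eq_bigr => _ /imsetP[psi0 P0 ->]; set T := terminate E psi0 U.
rewrite (eq_bigr (fun psi => Prc p psi U.2 * maxgain T)) => [|psi /andP[_ /eqP ->]//].
rewrite -big_distrl; congr (_ * _); move: P0; rewrite inE => /andP[full0 prec0].
rewrite (eq_bigl (fun psi => full E psi && prec T.2 psi)); last first.
  by move=> psi; rewrite inE terminate_fiber.
have [[oE _ _ LD] precUT _] := terminate_prec wU full0 prec0.
rewrite (eq_bigr (fun psi => Prc p T.2 U.2 * Prc p psi T.2)) => [|psi /andP[_]]; last first.
  exact: Prc_trans.
by rewrite -mulr_sumr (sum_Prc_full_extension p LD oE) mulr1.
Qed.


Lemma weight_splice_neq0 A B Y : weight A != 0 -> weight B != 0 ->
  weight (splice A B Y) != 0.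
Proof.
move=> /prodf_neq0 nA /prodf_neq0 nB; apply/prodf_neq0 => e _.
have [eY|eY] := boolP (e \in Y).
  by rewrite (in_splice_in _ _ eY); apply: nA.
by rewrite (in_splice_out _ _ eY); apply: nB.
Qed.

Lemma consistent_splice A B U : consistent A U -> consistent (splice A B (observed U)) U.
Proof.
move=> /andP[/subsetP LA DA]; apply/andP; split.
  by apply/subsetP => e eL; rewrite in_splice_in ?LA // in_setU eL.
rewrite disjoints_subset; apply/subsetP => e eD.
by rewrite inE in_splice_in ?(disjointFr DA eD) // in_setU eD orbT.
Qed.

(* A maximal gain of zero means that, in the positive-probability world [A],
   every node is already reached, hence active once the diffusion terminates. *)
Lemma maxgain_terminate_eq0 A U : weight A != 0 -> wf_status E U -> consistent A U ->
  maxgain U = 0 -> maxgain (terminate E (realize A) U) = 0.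
Proof.
move=> nA wU cU m0; have AE := weight_subset nA.
have reach_all v : v \in reach U.1 A.
  have : weight A * gain U.1 v A = 0.
    apply/eqP; rewrite eq_le mulr_ge0 ?weight_ge0 ?gain_ge0 // andbT.
    rewrite -m0; apply: le_trans (Deltaf_inf_le_maxgain U v).
    rewrite (Deltaf_inf_splice v wU cU) (bigD1 A) //= spliceXX lerDl.
    by apply: sumr_ge0 => B _; rewrite mulr_ge0 ?weight_ge0 ?gain_ge0.
  have vv : v \in reach [set v] A by rewrite (subsetP (sub_reach _ _)) ?set11.
  move/eqP; rewrite mulf_eq0 (negbTE nA) gainE pnatr_eq0 cards_eq0 => /eqP/setP/(_ v).
  by rewrite in_setD vv andbT in_set0 => /negbFE.
have allT : (terminate E (realize A) U).1 = setT.
  by rewrite terminate_reach //; apply/setP => v; rewrite in_setT reach_all.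
apply/le_anti; rewrite maxgain_ge0 andbT; apply: bigmax_le => // v _.
rewrite /Deltaf_inf /Deltaf_t big1 // => psi _.
by rewrite /Delta_t allT setTU subrr mulr0.
Qed.

Lemma alpha_num_le A U : weight A != 0 -> wf_status E U -> consistent A U ->
  alpha_num U <= alpha_inf E p U * maxgain U.
Proof.
move=> nA wU cU; have [m0|mn] := eqVneq (maxgain U) 0; last by rewrite /alpha_inf divfK.
rewrite m0 mulr0 (alpha_numE wU cU) big1 // => B _.
have [->|nB] := eqVneq (weight B) 0; first by rewrite mul0r.
by rewrite maxgain_terminate_eq0 ?mulr0 ?weight_splice_neq0 ?consistent_splice.
Qed.

Lemma alpha_inf_le_alphaT pig k d i A : (i < k)%N -> weight A != 0 ->
  alpha_inf E p (state pig d i A) <= alphaT E p pig k d.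
Proof.
move=> ik nA; have AE := weight_subset nA.
apply: le_bigmax_cond; rewrite inE; apply/orP; right.
apply/existsP; exists (realize A); apply/existsP; exists (Ordinal ik).
by rewrite full_realize // (Pr_realize p AE) lt_def nA (weight_ge0 hp) /=; apply/eqP.
Qed.

Lemma greedy_increment pig d i : greedy E p pig ->
  \sum_A weight A * maxgain (state pig d i A) = spread pig d i.+1 - spread pig d i.
Proof.
move=> pigG; set U := state pig d i.
transitivity (\sum_A weight A *
    \sum_B weight B * gain (U A).1 (pig (U A)) (splice A B (observed (U A)))).
  apply: eq_bigr => A _; rewrite (maxgain_greedy pigG (state_wf _ _ _ _) (state_consistent _ _ _ _)).
  by rewrite (Deltaf_inf_splice _ (state_wf _ _ _ _) (state_consistent _ _ _ _)).
rewrite -(@sum_weight_resample _ _ E p _ U (@observed V) (fun U C => gain U.1 (pig U) C)); last first.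
  by move=> A A'; apply: state_adapted.
rewrite /spread -sumrB; apply: eq_bigr => A _; rewrite -mulrBr; congr (_ * _).
by rewrite /gain reach_state_succ.
Qed.

Lemma reach_state_telescope pi d S A m :
  (#|reach (S :|: (state pi d m A).1) A|)%:R =
  (#|reach S A|)%:R + \sum_(j < m) gain (S :|: (state pi d j A).1) (pi (state pi d j A)) A :> R.
Proof.
elim: m => [|m IHm]; first by rewrite big_ord0 addr0 /state /= setU0.
rewrite big_ord_recr /= addrA -IHm /gain.
have -> : reach (S :|: (state pi d m.+1 A).1) A =
          reach ((S :|: (state pi d m A).1) :|: [set pi (state pi d m A)]) A.
  by rewrite reachU reach_state_succ !reachU setUA.
by rewrite addrC subrK.
Qed.

Definition out_edges (Y : {set V}) : {set V * V} := [set e | e.1 \in Y].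

Lemma in_out_edges (Y : {set V}) e : (e \in out_edges Y) = (e.1 \in Y).
Proof. by rewrite inE. Qed.

(* Adaptive submodularity: resampling the edges leaving [reach X A] can only
   add to the gain of [w] what is still unobserved at the terminal status [T]. *)
Lemma gain_le_terminated A B T S X w : B \subset E -> wf_status E T ->
  attempts E T = set0 -> T.1 = reach S A -> S \subset X ->
  gain X w (splice A B (out_edges (reach X A))) <= gain T.1 w (splice A B (observed T)).
Proof.
move=> /subsetP BE [_ _ Ttail _] att0 TSA SX.
set RX := reach X A; set C1 := splice A B (out_edges RX); set C2 := splice A B (observed T).
have TRX : T.1 \subset RX by rewrite TSA reachS.
have reachC1 : reach X C1 = RX.
  by apply: reach_local => e e1; rewrite /C1 in_splice_in // in_out_edges.
have reachC2 : reach T.1 C2 = T.1.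
  apply/eqP; rewrite eqEsubset sub_reach andbT; apply: reach_min => // u v uT.
  have [uvO|uvO] := boolP ((u, v) \in observed T).
    by rewrite /C2 in_splice_in // TSA => uvA; apply: reach_step uvA; rewrite -TSA.
  rewrite /C2 in_splice_out // => uvB; apply/negPn/negP => vT.
  have : (u, v) \in attempts E T.
    by rewrite in_attempts BE //= uT vT /=; move: uvO; rewrite /observed in_setU negb_or.
  by rewrite att0 in_set0.
have reach_w : reach [set w] C1 \subset reach [set w] C2 :|: RX.
  apply: reach_min; first exact: subset_trans (sub_reach _ _) (subsetUl _ _).
  move=> u v /setUP[uR|uRX] uv; last first.
    by move: uv; rewrite /C1 in_splice_in ?in_out_edges // => uv; rewrite in_setU (reach_step uRX uv) orbT.
  have [uRX|uRX] := boolP (u \in RX).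
    by move: uv; rewrite /C1 in_splice_in ?in_out_edges // => uv; rewrite in_setU (reach_step uRX uv) orbT.
  move: uv; rewrite /C1 in_splice_out ?in_out_edges // => uvB.
  have uvO : (u, v) \notin observed T by apply: contra uRX => /Ttail /(subsetP TRX).
  by rewrite in_setU (reach_step uR (_ : (u, v) \in C2)) // /C2 in_splice_out.
rewrite !gainE reachC1 reachC2 ler_nat; apply: subset_leq_card; apply/subsetP => v.
rewrite !in_setD => /andP[vRX /(subsetP reach_w)]; rewrite in_setU (negbTE vRX) orbF => ->.
by rewrite andbT; apply: contra vRX => /(subsetP TRX).
Qed.


Lemma optimal_gain_le pig pis d i j :
  \sum_A weight A * gain ((state pig d i A).1 :|: (state pis d j A).1) (pis (state pis d j A)) A
  <= \sum_A weight A * maxgain (terminate E (realize A) (state pig d i A)).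
Proof.
pose X A := (state pig d i A).1 :|: (state pis d j A).1.
pose w A := pis (state pis d j A).
pose O A := out_edges (reach (X A) A).
have stopping_XwO A A' : (forall e, e \in O A -> (e \in A) = (e \in A')) ->
    (X A', w A', O A') = (X A, w A, O A).
  move=> AA'.
  have sub_O U : wf_status E U -> U.1 \subset X A -> {subset observed U <= O A}.
    move=> [_ _ tail _] /subsetP UX e /tail e1; rewrite in_out_edges.
    by apply: (subsetP (sub_reach _ _)); apply: UX.
  have agree U : wf_status E U -> U.1 \subset X A ->
      forall e, e \in observed U -> (e \in A) = (e \in A').
    by move=> wU UX e /(sub_O _ wU UX); apply: AA'.
  have Xw : X A' = X A /\ w A' = w A.
    rewrite /X /w !(state_adapted (A := A)) //; apply: agree (state_wf _ _ _ _) _.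
      exact: subsetUr.
    exact: subsetUl.
  by rewrite /O Xw.1 Xw.2 (reach_local (A := A)) // => e e1; apply: AA'; rewrite in_out_edges.
rewrite (@sum_weight_resample _ _ E p _ (fun A => (X A, w A, O A)) (fun x => x.2)
  (fun x C => gain x.1.1 x.1.2 C)); last exact: stopping_XwO.
apply: (ler_sum_weight hp) => A nA; have AE := weight_subset nA.
set T := terminate E (realize A) (state pig d i A).
have [_ _ wfT consT] := admissible_terminate E.
have wT : wf_status E T := wfT _ _ (state_wf pig d i A).
have cT : consistent A T := consT _ _ (state_consistent pig d i A).
apply: le_trans (Deltaf_inf_le_maxgain T (w A)).
rewrite (Deltaf_inf_splice (w A) wT cT); apply: (ler_sum_weight hp) => B nB.
apply: (gain_le_terminated (S := (state pig d i A).1)) => //.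
- exact: weight_subset nB.
- exact: attempts_terminate.
- exact: terminate_reach (state_wf _ _ _ _) (state_consistent _ _ _ _).
- exact: subsetUl.
Qed.

Lemma Fval_le_spread pig pis d i k : Fval E p pis k d <=
  spread pig d i + k%:R * \sum_A weight A * maxgain (terminate E (realize A) (state pig d i A)).
Proof.
rewrite Fval_spread /spread.
have telescope A : (#|reach (state pis d k A).1 A|)%:R <=
    (#|reach (state pig d i A).1 A|)%:R + \sum_(j < k)
      gain ((state pig d i A).1 :|: (state pis d j A).1) (pis (state pis d j A)) A :> R.
  by rewrite -reach_state_telescope ler_nat subset_leq_card // reachS // subsetUr.
apply: le_trans (ler_sum_weight hp (fun A _ => telescope A)) _.
under eq_bigr do rewrite mulrDr mulr_sumr.
rewrite big_split lerD2l /= exchange_big /=.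
apply: le_trans (_ : _ <= \sum_(j < k)
  \sum_A weight A * maxgain (terminate E (realize A) (state pig d i A))) _.
  by apply: ler_sum => j _; apply: optimal_gain_le.
by rewrite sumr_const card_ord mulr_natl.
Qed.

Lemma terminated_maxgain_le pig d k i : (i < k)%N ->
  \sum_A weight A * maxgain (terminate E (realize A) (state pig d i A)) <=
  alphaT E p pig k d * \sum_A weight A * maxgain (state pig d i A).
Proof.
move=> ik; rewrite mulr_sumr; under [X in _ <= X]eq_bigr do rewrite mulrCA.
rewrite (@sum_weight_resample _ _ E p _ (state pig d i) (@observed V)
  (fun U C => maxgain (terminate E (realize C) U))); last by move=> A A'; apply: state_adapted.
apply: (ler_sum_weight hp) => A nA.
have wU := state_wf pig d i A; have cU := state_consistent pig d i A.
rewrite -(alpha_numE wU cU); apply: le_trans (alpha_num_le nA wU cU) _.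
by apply: ler_wpM2r; [exact: maxgain_ge0 | exact: alpha_inf_le_alphaT].
Qed.

End AdaptiveGreedy.

Section Recurrence.
Variable R : realType.

Lemma contraction_step (c r x x' y : R) : 0 < c -> 1 - c^-1 <= r -> 0 <= r -> 0 <= y ->
  x <= y -> x' <= x -> x <= c * (x - x') -> x' <= r * y.
Proof.
move=> c0 rc r0 y0 xy x'x key.
have [x0|x0] := leP 0 x; last exact: le_trans x'x (le_trans (ltW x0) (mulr_ge0 r0 y0)).
have x'c : x' <= (1 - c^-1) * x.
  rewrite -(ler_pM2l c0) mulrA mulrBr mulr1 mulrV ?unitfE ?gt_eqF //.
  by rewrite mulrBr in key; lra.
by apply: le_trans x'c (le_trans (ler_wpM2r x0 rc) (ler_wpM2l r0 xy)).
Qed.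

(* If each of [k] greedy steps closes a [1/(k a)] fraction of the gap to [Fs],
   the gap shrinks geometrically, by [(1 - 1/(k a))^k <= e^(-1/a)]. *)
Lemma greedy_recurrence_bound (k : nat) (a Fs : R) (G : nat -> R) :
  (0 < k)%N -> 0 <= a -> 0 <= Fs -> G 0%N = 0 ->
  (forall i, (i < k)%N -> G i <= G i.+1) ->
  (forall i, (i < k)%N -> Fs <= G i + k%:R * a * (G i.+1 - G i)) ->
  (1 - expR (- a^-1)) * Fs <= G k.
Proof.
move=> k0 a0 Fs0 G0 Ginc key.
have G_ge0 i : (i <= k)%N -> 0 <= G i.
  by elim: i => [|i IHi] ik; [rewrite G0 | apply: le_trans (IHi (ltnW ik)) (Ginc i ik)].
have [->|an] := eqVneq a 0; first by rewrite invr0 oppr0 expR0 subrr mul0r G_ge0.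
have c0 : 0 < k%:R * a by rewrite mulr_gt0 ?ltr0n // lt_def an a0.
set c := k%:R * a in key c0; set r := Num.max (1 - c^-1) 0.
have r0 : 0 <= r by rewrite le_max lexx orbT.
have rc : 1 - c^-1 <= r by rewrite le_max lexx.
have r_exp : r <= expR (- c^-1) by rewrite ge_max expR_ge1Dx (ltW (expR_gt0 _)).
have decay i : (i <= k)%N -> Fs - G i <= r ^+ i * Fs.
  elim: i => [|i IHi] ik; first by rewrite G0 subr0 expr0 mul1r.
  rewrite exprS -mulrA; apply: (contraction_step c0 rc r0).
  - by rewrite mulr_ge0 ?exprn_ge0.
  - exact: IHi (ltnW ik).
  - by rewrite lerD2l lerN2 Ginc.
  - have -> : Fs - G i - (Fs - G i.+1) = G i.+1 - G i by ring.
    by have := key i ik; lra.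
have r_pow : r ^+ k <= expR (- a^-1).
  have -> : - a^-1 = - c^-1 * k%:R.
    by rewrite /c; field; rewrite an pnatr_eq0 -lt0n k0.
  by rewrite expRM_natr lerXn2r ?nnegrE ?(ltW (expR_gt0 _)).
have := le_trans (decay k (leqnn k)) (ler_wpM2r Fs0 r_pow).
by rewrite mulrBl mul1r lerBlDr addrC -lerBlDr.
Qed.

End Recurrence.

Unset Implicit Arguments.
Set Strict Implicit.

Theorem theorem1 (R : realType) (V : finType) (E : {set (V * V)})
    (p : (V * V) -> R)
    (hp : forall e, e \in E -> 0 < p e <= 1)
    (k d : nat) (hk : (0 < k)%N) (hd : (0 < d)%N)
    (pig : policy V) (hg : greedy E p pig) (pis : policy V) :
  (1 - expR (- (alphaT E p pig k d)^-1)) * Fval E p pis k d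
    <= Fval E p pig k d.
Proof.
rewrite [X in _ <= X]Fval_spread.
apply: greedy_recurrence_bound => //.
- exact: bigmax_ge_id.
- rewrite Fval_spread; apply: sumr_ge0 => A _.
  by rewrite mulr_ge0 ?weight_ge0.
- by rewrite /spread big1 // => A _; rewrite /state /= reach0 cards0 mulr0.
- move=> i _; rewrite -subr_ge0 -(greedy_increment hp d i hg).
  by apply: sumr_ge0 => A _; rewrite mulr_ge0 ?weight_ge0 ?maxgain_ge0.
- move=> i ik; apply: le_trans (Fval_le_spread hp pig pis d i k) _.
  rewrite lerD2l -mulrA ler_wpM2l // -(greedy_increment hp d i hg).
  exact: terminated_maxgain_le.
Qed.
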